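(* Let $\delta>0$ and positive integers $d',p$. Define $\mathcal N^{RS}_\delta:\mathbb{R}^{d'}\times\mathbb{R}^p\to\mathbb{R}^p$ by $y_k=1+\sum_{j\in[d']}\mathcal N^C_\delta(x_k,x_j)$ for $k\in[d']$ and $\mathcal N^{RS}_\delta(\mathbf{x},\mathbf{r})[i]=\sum_{k\in[d']}\mathcal N^{IFP}(x_k,r_i-y_k)$ for $i\in[p]$. If $\mathbf{x}\in[0,1]^{d'}$ is such that for all $j\ne k$ either $|x_j-x_k|\ge\delta$ or $x_j=x_k=0$, and $\mathbf{r}\in\{1,\dots,d'\}^p$, then the output $\mathbf{x}'=\mathcal N^{RS}_\delta(\mathbf{x},\mathbf{r})$ satisfies $x'_i=\mathcal R_{r_i}(\mathbf{x})$ for all $i\in[p]$. Further, for arbitrary $\mathbf{x}\in\mathbb{R}^{d'}$, $|x'_i|\le d'\|\mathbf{x}\|_\infty$. Moreover, $\mathcal N^{RS}_\delta$ is a ReLU network with 2 hidden layers, width at most $\max(2{d'}^2+2d'+2p,\,4pd')$, and magnitudes of weights bounded by $\frac1\delta$.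
   Context: $\mathcal N^C_\delta(x_1,x_2)=\left[\frac1\delta(x_1-x_2)\right]_+-\left[\frac1\delta(x_1-x_2-\delta)\right]_+$ (comparison network) and $\mathcal N^{IFP}(x,s)=[x+s]_+-[x+s-1]_+-[s]_++[s-1]_+$ (indicator function product network), where $[z]_+=\max\{0,z\}$. $\mathcal R_r(\mathbf{x})$ is the $r$-th entry of $\mathbf{x}$ in ascending sorted order. Width is the number of neurons in the largest hidden layer. *)

From HB Require Import structures.
From mathcomp Require Import all_boot all_order all_algebra.
Set Implicit Arguments. Unset Strict Implicit. Unset Printing Implicit Defensive.
Import Order.TTheory GRing.Theory Num.Theory.
Local Open Scope ring_scope.

Section Defs.
Variable R : realFieldType.

Definition relu (z : R) : R := Num.max 0 z.

Definition NC (delta x1 x2 : R) : R :=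
  relu ((x1 - x2) / delta) - relu ((x1 - x2 - delta) / delta).

Definition NIFP (x s : R) : R :=
  relu (x + s) - relu (x + s - 1) - relu s + relu (s - 1).

Definition NRS_y (delta : R) (d : nat) (x : 'I_d -> R) (k : 'I_d) : R :=
  1 + \sum_(j < d) NC delta (x k) (x j).

Definition NRS (delta : R) (d p : nat) (x : 'I_d -> R) (r : 'I_p -> R)
  (i : 'I_p) : R :=
  \sum_(k < d) NIFP (x k) (r i - NRS_y delta x k).

(* R_r(x): the r-th entry (1-indexed) of x in ascending sorted order *)
Definition rank_stat (d : nat) (x : 'I_d -> R) (r : nat) : R :=
  nth 0 (sort <=%R [seq x i | i <- enum 'I_d]) r.-1.

Definition sup_norm (d : nat) (x : 'I_d -> R) : R :=
  \big[Num.max/0]_(i < d) `|x i|.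

Definition reluv (n : nat) (v : 'cV[R]_n) : 'cV[R]_n := map_mx relu v.

Definition net2 (n0 n1 n2 n3 : nat)
  (W1 : 'M[R]_(n1, n0)) (b1 : 'cV[R]_n1)
  (W2 : 'M[R]_(n2, n1)) (b2 : 'cV[R]_n2)
  (W3 : 'M[R]_(n3, n2)) (b3 : 'cV[R]_n3) (v : 'cV[R]_n0) : 'cV[R]_n3 :=
  W3 *m reluv (W2 *m reluv (W1 *m v + b1) + b2) + b3.

Definition mx_bounded (m n : nat) (c : R) (A : 'M[R]_(m, n)) : Prop :=
  forall i j, `|A i j| <= c.

Definition net_input (d p : nat) (x : 'I_d -> R) (r : 'I_p -> R)
  : 'cV[R]_(d + p) :=
  col_mx (\col_(j < d) x j) (\col_(j < p) r j).

End Defs.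

(* On inputs separated by delta every comparison N^C_delta(x_k, x_j) is exactly
   the indicator of x_j < x_k, so y_k - 1 counts the entries strictly below x_k;
   since the nonzero entries are pairwise distinct, this is the position of x_k
   in the sorted sequence whenever x_k <> 0.  For x in [0, 1] and an integer n,
   N^IFP(x, n) is x if n = 0 and 0 otherwise, hence output i is the sum of the
   entries of rank r_i: the unique nonzero one if the r_i-th order statistic is
   nonzero, and nothing otherwise.  Writing ramp for the clamp to [0, 1], we have
   N^C_delta(a, b) = ramp((a - b)/delta) and N^IFP(x, s) = ramp(x + s) - ramp(s);
   as ramp is 1-Lipschitz, |N^IFP(x, s)| <= |x|, which gives the magnitude bound.
   The network computes the 2d^2 + 2d + 2p ReLUs of the comparisons and of
   +-x_k, +-(r_i - 1) in its first layer and the 4pd ReLUs of the N^IFP in its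
   second one, with all weights in {0, +-1, +-1/delta}. *)

From HB Require Import structures.
From mathcomp Require Import all_boot all_order all_algebra.
From mathcomp Require Import ring lra zify.

Set Implicit Arguments.
Unset Strict Implicit.
Unset Printing Implicit Defensive.
Import Order.TTheory GRing.Theory Num.Theory.
Local Open Scope ring_scope.

Lemma count_lt_nth_sorted disp (T : porderType disp) (x0 : T) (s : seq T) m :
  sorted <=%O s -> (m < size s)%N -> count_mem (nth x0 s m) s = 1%N ->
  count (fun y => (y < nth x0 s m)%O) s = m.
Proof.
move=> s_sorted ms v_once; set v := nth x0 s m.
have s_split : s = take m s ++ v :: drop m.+1 s.
  by rewrite -(drop_nth x0 ms) cat_take_drop.
have size_take_m : size (take m s) = m by rewrite size_take ms.
have before_le : all (fun y => (y <= v)%O) (take m s).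
  apply/(all_nthP x0) => i; rewrite size_take_m => im; rewrite nth_take //.
  by apply: le_sorted_leq_nth => //; rewrite ?inE /=; lia.
have after_ge : all (fun y => (v <= y)%O) (drop m.+1 s).
  apply/(all_nthP x0) => i; rewrite size_drop => im; rewrite nth_drop.
  by apply: le_sorted_leq_nth => //; rewrite ?inE /=; lia.
have v_notin_take : v \notin take m s.
  rewrite -has_pred1 has_count -leqNgt.
  by move: v_once; rewrite {2}s_split count_cat /= eqxx -/v add1n; lia.
rewrite s_split count_cat /= ltxx add0n.
have -> : count (fun y => (y < v)%O) (drop m.+1 s) = 0%N.
  apply/eqP; rewrite -leqn0 leqNgt -has_count.
  by apply/hasPn => y /(allP after_ge)/le_gtF ->.
rewrite addn0 -{2}size_take_m; apply/eqP; rewrite -all_count; apply/allP => y hy.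
by rewrite lt_neqAle (allP before_le y hy) andbT; apply: contraNneq v_notin_take => <-.
Qed.

Section Ramp.
Variable R : realFieldType.
Implicit Types (a b s t x delta : R).

Lemma ger0_relu t : 0 <= t -> relu t = t.
Proof. by move=> t_ge0; rewrite /relu max_r. Qed.

Lemma ler0_relu t : t <= 0 -> relu t = 0.
Proof. by move=> t_le0; rewrite /relu max_l. Qed.

Lemma relu_subN t : relu t - relu (- t) = t.
Proof.
have [t_ge0 | t_lt0] := lerP 0 t.
  by rewrite ger0_relu // ler0_relu ?oppr_le0 // subr0.
by rewrite ler0_relu ?ger0_relu ?oppr_ge0 ?sub0r ?opprK // ltW.
Qed.

Lemma relu_cases t : (0 <= t /\ relu t = t) \/ (t <= 0 /\ relu t = 0).
Proof.
have [t_ge0 | t_lt0] := lerP 0 t; first by left; rewrite ger0_relu.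
by right; rewrite ler0_relu ltW.
Qed.

Definition ramp t : R := relu t - relu (t - 1).

Lemma ramp_le0 t : t <= 0 -> ramp t = 0.
Proof. by move=> t_le0; rewrite /ramp !ler0_relu ?subr0 //; lra. Qed.

Lemma ramp_ge1 t : 1 <= t -> ramp t = 1.
Proof. by move=> t_ge1; rewrite /ramp !ger0_relu; [ring | lra | lra]. Qed.

Lemma ramp_id t : 0 <= t <= 1 -> ramp t = t.
Proof.
by move=> /andP[t_ge0 t_le1]; rewrite /ramp ger0_relu // ler0_relu ?subr0 //; lra.
Qed.

Lemma ramp_lipschitz a b : `|ramp a - ramp b| <= `|a - b|.
Proof.
have := ler_norm (a - b); have := ler_norm (b - a); rewrite distrC => ? ?.
rewrite ler_norml /ramp.
have [[? ->]|[? ->]] := relu_cases a; have [[? ->]|[? ->]] := relu_cases (a - 1);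
have [[? ->]|[? ->]] := relu_cases b; have [[? ->]|[? ->]] := relu_cases (b - 1);
by apply/andP; split; lra.
Qed.

Lemma NC_ramp delta a b : delta != 0 -> NC delta a b = ramp ((a - b) / delta).
Proof.
by move=> delta_neq0; rewrite /NC /ramp; congr (_ - relu _); field.
Qed.

Lemma NIFP_ramp x s : NIFP x s = ramp (x + s) - ramp s.
Proof. by rewrite /NIFP /ramp; ring. Qed.

Lemma NC_separated delta a b : 0 < delta -> a = b \/ delta <= `|a - b| ->
  NC delta a b = (b < a)%R%:R.
Proof.
move=> delta_gt0 sep; rewrite NC_ramp ?gt_eqF //.
case: sep => [->|far]; first by rewrite subrr mul0r ramp_le0 ?ltxx.
have [b_lt_a | a_le_b] := ltrP b a.
  rewrite ramp_ge1 // ler_pdivlMr // mul1r.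
  by rewrite gtr0_norm ?subr_gt0 in far.
by rewrite ramp_le0 // pmulr_lle0 ?invr_gt0 // subr_le0.
Qed.

Lemma NIFP_natB x (m n : nat) : 0 <= x <= 1 ->
  NIFP x (m%:R - n%:R) = if m == n then x else 0.
Proof.
move=> x01; rewrite NIFP_ramp.
case: ltngtP => [m_lt_n | n_lt_m | ->].
- have : m.+1%:R <= n%:R :> R by rewrite ler_nat.
  by rewrite -natr1 => ?; rewrite !ramp_le0 ?subr0 //; lra.
- have : n.+1%:R <= m%:R :> R by rewrite ler_nat.
  by rewrite -natr1 => ?; rewrite !ramp_ge1 ?subrr //; lra.
- by rewrite subrr addr0 ramp_id // ramp_le0 ?subr0.
Qed.

Lemma NIFP_norm_le x s : `|NIFP x s| <= `|x|.
Proof. by rewrite NIFP_ramp; apply: le_trans (ramp_lipschitz _ _) _; rewrite addrK. Qed.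

Lemma sum_sign_relu (t : R) : \sum_(b : bool) (-1) ^+ b * relu ((-1) ^+ b * t) = t.
Proof. by rewrite big_bool /= expr0 expr1 !mul1r !mulN1r addrC relu_subN. Qed.

Lemma sum_sign_relu_shift (t : R) :
  \sum_(b : bool) (-1) ^+ b * relu (t - b%:R) = ramp t.
Proof. by rewrite big_bool /= expr0 expr1 mul1r mulN1r subr0 addrC. Qed.

Lemma sum_sign_relu_NIFP (x s : R) :
  \sum_(a : bool) \sum_(c : bool) (-1) ^+ (a == c) * relu (a%:R * x + s - c%:R)
  = NIFP x s.
Proof.
by rewrite !big_bool /= /NIFP !expr0 !expr1 !mul1r !mul0r !mulN1r !add0r !subr0; ring.
Qed.

End Ramp.

Lemma natr_sum_count (R : pzSemiRingType) (T : Type) (r : seq T) (P : pred T) :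
  \sum_(i <- r) (P i)%:R = (count P r)%:R :> R.
Proof. by elim: r => [|y r IH]; rewrite ?big_nil ?big_cons //= natrD IH. Qed.

Lemma sum_pair (R : nmodType) (I J : finType) (F : I * J -> R) :
  \sum_(t : I * J) F t = \sum_(i : I) \sum_(j : J) F (i, j).
Proof. by rewrite pair_big /=; apply: eq_bigr => -[]. Qed.

Lemma sum_eq_single (R : nmodType) (I : finType) (k : I) (F : I -> R) :
  (forall i, i != k -> F i = 0) -> \sum_i F i = F k.
Proof. by move=> F0; rewrite (bigD1 k) //= big1 ?addr0. Qed.
Arguments sum_eq_single {R I} k {F}.

Lemma sum_pred1_mul (R : pzSemiRingType) (I : finType) (k : I) (c : R) (F : I -> R) :
  \sum_i (if i == k then c else 0) * F i = c * F k.
Proof. by rewrite (sum_eq_single k) ?eqxx // => i /negbTE ->; rewrite mul0r. Qed.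

Section SeparatedInput.
Variables (R : realFieldType) (delta : R) (d : nat) (x : 'I_d -> R).
Hypothesis delta_gt0 : 0 < delta.
Hypothesis x01 : forall k, 0 <= x k <= 1.
Hypothesis x_sep :
  forall j k, j != k -> delta <= `|x j - x k| \/ (x j = 0 /\ x k = 0).

Let s := sort <=%R [seq x i | i <- enum 'I_d].

Let s_sorted : sorted <=%R s.
Proof. exact/sort_sorted/le_total. Qed.

Let perm_s : perm_eq s [seq x i | i <- enum 'I_d].
Proof. by rewrite perm_sort. Qed.

Lemma NRS_y_separated k : NRS_y delta x k = (count (< x k) s).+1%:R.
Proof.
rewrite /NRS_y -natr1 addrC; congr (_ + 1).
rewrite -natr_sum_count (perm_big _ perm_s) big_map big_enum /=.
apply: eq_bigr => j _; apply: NC_separated => //.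
have [<-|kj] := eqVneq k j; first by left.
by case: (x_sep kj) => [far|[-> ->]]; [right | left].
Qed.

Lemma separated_nonzero_inj {j k} : x j = x k -> x k != 0 -> j = k.
Proof.
move=> xjk xk_neq0; apply/eqP/contraT => jk.
case: (x_sep jk) => [|[_ xk0]]; last by rewrite xk0 eqxx in xk_neq0.
by rewrite xjk subrr normr0 leNgt delta_gt0.
Qed.

Lemma count_mem_separated k : x k != 0 -> count_mem (x k) s = 1%N.
Proof.
move=> xk_neq0; rewrite (permP perm_s) count_map.
rewrite (@eq_count _ _ (pred1 k)); last first.
  move=> j /=; apply/eqP/eqP => [|-> //].
  by move=> xjk; apply: separated_nonzero_inj.
by rewrite count_uniq_mem ?enum_uniq ?mem_enum.
Qed.

Lemma nth_count_lt_separated k : x k != 0 -> nth 0 s (count (< x k) s) = x k.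
Proof.
move=> xk_neq0.
have xk_in_s : x k \in s by rewrite (perm_mem perm_s) map_f ?mem_enum.
rewrite -[in count _ _](nth_index 0 xk_in_s) count_lt_nth_sorted //.
  by rewrite nth_index.
by rewrite index_mem.
by rewrite nth_index // count_mem_separated.
Qed.

Lemma NRS_sum_separated m : (m < d)%N ->
  \sum_(k < d) NIFP (x k) (m.+1%:R - NRS_y delta x k) = nth 0 s m.
Proof.
move=> m_lt_d.
under eq_bigr => k _ do rewrite NRS_y_separated NIFP_natB // eqSS eq_sym.
have [k /andP[/eqP rank_k xk_neq0] | no_rank_m] :=
  pickP (fun k => (count (< x k) s == m) && (x k != 0)).
  rewrite (sum_eq_single k) => [|j jk].
    by rewrite rank_k eqxx -rank_k nth_count_lt_separated.
  case: eqP => // rank_j; apply/eqP/contraT => xj_neq0.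
  have xjk : x j = x k.
    by rewrite -nth_count_lt_separated // rank_j -rank_k nth_count_lt_separated.
  by rewrite (separated_nonzero_inj xjk xk_neq0) eqxx in jk.
rewrite big1 => [|k _]; last first.
  by have := no_rank_m k; case: eqP => //= _ /negbFE/eqP.
apply/esym/eqP/contraT => nth_neq0.
have m_lt_s : (m < size s)%N by rewrite size_sort size_map size_enum_ord.
have := mem_nth 0 m_lt_s; rewrite (perm_mem perm_s) => /mapP[k _ nth_eq].
have rank_k : count (< x k) s = m.
  by rewrite -nth_eq count_lt_nth_sorted // nth_eq count_mem_separated // -nth_eq.
by move: (no_rank_m k); rewrite rank_k eqxx -nth_eq nth_neq0.
Qed.

End SeparatedInput.

Lemma normr_le_sup_norm (R : realFieldType) d (x : 'I_d -> R) k :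
  `|x k| <= sup_norm x.
Proof. by rewrite /sup_norm (bigD1 k) //= le_max lexx. Qed.

Lemma NRS_norm_le (R : realFieldType) (delta : R) d p (x : 'I_d -> R)
    (r : 'I_p -> R) i :
  `|NRS delta x r i| <= d%:R * sup_norm x.
Proof.
rewrite /NRS; apply: le_trans (ler_norm_sum _ _ _) _.
apply: (@le_trans _ _ (\sum_(k < d) sup_norm x)).
  by apply: ler_sum => k _; apply: le_trans (NIFP_norm_le _ _) (normr_le_sup_norm _ _).
by rewrite sumr_const card_ord mulr_natl.
Qed.

Section Network.
Variables (R : realFieldType) (delta : R) (d p : nat).

(* Neuron (k, k', b) of the first hidden layer computes relu((x_k - x_k')/delta - b),
   (k, b) computes relu(+-x_k) and (i, b) computes relu(+-(r_i - 1)); neuron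
   (i, k, a, c) of the second layer computes relu(a x_k + r_i - y_k - c). *)
Definition hidden1 : finType := ('I_d * 'I_d * bool + 'I_d * bool + 'I_p * bool)%type.
Definition hidden2 : finType := ('I_p * 'I_d * bool * bool)%type.

Definition w1x (u : hidden1) (j : 'I_d) : R :=
  match u with
  | inl (inl (k, k', _)) =>
      (if j == k then delta^-1 else 0) - (if j == k' then delta^-1 else 0)
  | inl (inr (k, b)) => if j == k then (-1) ^+ b else 0
  | inr _ => 0
  end.

Definition w1r (u : hidden1) (i : 'I_p) : R :=
  if u is inr (i', b) then (if i == i' then (-1) ^+ b else 0) else 0.

Definition bias1 (u : hidden1) : R :=
  match u with
  | inl (inl (_, _, b)) => - b%:R
  | inl (inr _) => 0
  | inr (_, b) => - (-1) ^+ b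
  end.

Definition w2 (v : hidden2) (u : hidden1) : R :=
  let: (i, k, a, _) := v in
  match u with
  | inl (inl (k', _, b)) => if k' == k then - (-1) ^+ b else 0
  | inl (inr (k', b)) => if k' == k then a%:R * (-1) ^+ b else 0
  | inr (i', b) => if i' == i then (-1) ^+ b else 0
  end.

Definition bias2 (v : hidden2) : R := let: (_, _, _, c) := v in - c%:R.

Definition w3 (i : 'I_p) (v : hidden2) : R :=
  let: (i', _, a, c) := v in if i' == i then (-1) ^+ (a == c) else 0.

Definition W1 : 'M[R]_(#|hidden1|, d + p) :=
  row_mx (\matrix_(u, j) w1x (enum_val u) j) (\matrix_(u, i) w1r (enum_val u) i).
Definition B1 : 'cV[R]_#|hidden1| := \col_u bias1 (enum_val u).
Definition W2 : 'M[R]_(#|hidden2|, #|hidden1|) :=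
  \matrix_(v, u) w2 (enum_val v) (enum_val u).
Definition B2 : 'cV[R]_#|hidden2| := \col_v bias2 (enum_val v).
Definition W3 : 'M[R]_(p, #|hidden2|) := \matrix_(i, v) w3 i (enum_val v).

Lemma width_hidden :
  (maxn #|hidden1| #|hidden2| <= maxn (2 * d ^ 2 + 2 * d + 2 * p) (4 * p * d))%N.
Proof. by rewrite !card_sum !card_prod !card_ord card_bool; lia. Qed.

Section Evaluation.
Variables (x : 'I_d -> R) (r : 'I_p -> R).
Hypothesis delta_neq0 : delta != 0.

Definition hidden1_pre (u : hidden1) : R :=
  match u with
  | inl (inl (k, k', b)) => (x k - x k') / delta - b%:R
  | inl (inr (k, b)) => (-1) ^+ b * x k
  | inr (i, b) => (-1) ^+ b * (r i - 1)
  end.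

Lemma hidden1_eval u : (W1 *m net_input x r + B1) u 0 = hidden1_pre (enum_val u).
Proof.
rewrite /net_input mul_row_col !mxE.
under eq_bigr do rewrite !mxE.
under [X in _ + X + _]eq_bigr do rewrite !mxE.
have sum_mul0 n (F : 'I_n -> R) : \sum_(i < n) 0 * F i = 0.
  by rewrite big1 // => i _; rewrite mul0r.
case: (enum_val u) => [[[[k k'] b]|[k b]]|[i b]] /=; rewrite sum_mul0.
- rewrite (eq_bigr _ (fun j _ => mulrBl _ _ _)) sumrB !sum_pred1_mul; ring.
- by rewrite sum_pred1_mul !addr0.
- by rewrite sum_pred1_mul add0r mulrBr mulr1.
Qed.

Lemma sum_w2_hidden1 i k a c :
  \sum_(u : hidden1) w2 (i, k, a, c) u * relu (hidden1_pre u)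
  = - \sum_(j < d) NC delta (x k) (x j) + a%:R * x k + (r i - 1).
Proof.
rewrite !big_sumType /= !sum_pair; congr (_ + _ + _).
- rewrite (sum_eq_single k) => [|k' /negbTE k'k]; last first.
    by rewrite big1 // => j _; rewrite big1 // => b _; rewrite k'k mul0r.
  rewrite eqxx -sumrN; apply: eq_bigr => j _.
  rewrite NC_ramp // -sum_sign_relu_shift -sumrN; apply: eq_bigr => b _.
  by rewrite mulNr.
- rewrite (sum_eq_single k) => [|k' /negbTE k'k]; last first.
    by rewrite big1 // => b _; rewrite k'k mul0r.
  rewrite eqxx -[in RHS](sum_sign_relu (x k)) mulr_sumr; apply: eq_bigr => b _.
  by rewrite mulrA.
- rewrite (sum_eq_single i) => [|i' /negbTE i'i]; last first.
    by rewrite big1 // => b _; rewrite i'i mul0r.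
  by rewrite eqxx sum_sign_relu.
Qed.

Definition hidden2_pre (v : hidden2) : R :=
  let: (i, k, a, c) := v in a%:R * x k + (r i - NRS_y delta x k) - c%:R.

Lemma hidden2_eval v :
  (W2 *m reluv (W1 *m net_input x r + B1) + B2) v 0 = hidden2_pre (enum_val v).
Proof.
rewrite !mxE /reluv.
under eq_bigr do rewrite [map_mx _ _ _ _]mxE hidden1_eval [W2 _ _]mxE.
rewrite -(big_enum_val (fun u => w2 (enum_val v) u * relu (hidden1_pre u))).
case: (enum_val v) => [[[i k] a] c]; rewrite sum_w2_hidden1 /= /NRS_y; ring.
Qed.

Lemma network_eval i :
  net2 W1 B1 W2 B2 W3 0 (net_input x r) i 0 = NRS delta x r i.
Proof.
rewrite /net2 !mxE addr0 /reluv.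
under eq_bigr do rewrite [map_mx _ _ _ _]mxE hidden2_eval [W3 _ _]mxE.
rewrite -(big_enum_val (fun v => w3 i v * relu (hidden2_pre v))) /= !sum_pair.
rewrite (sum_eq_single i) => [|i' /negbTE i'i]; last first.
  by apply: big1 => k _; apply: big1 => a _; apply: big1 => c _; rewrite /= i'i mul0r.
apply: eq_bigr => k _; rewrite -sum_sign_relu_NIFP.
by apply: eq_bigr => a _; apply: eq_bigr => c _; rewrite /= eqxx addrA.
Qed.

End Evaluation.

Section Bounds.
Hypothesis delta_gt0 : 0 < delta.

Let M := Num.max 1 delta^-1.
Let one_le_M : 1 <= M. Proof. by rewrite le_max lexx. Qed.
Let zero_le_M : 0 <= M. Proof. exact: le_trans ler01 one_le_M. Qed.
Let inv_le_M : delta^-1 <= M. Proof. by rewrite le_max lexx orbT. Qed.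

Lemma weights_bounded :
  mx_bounded M W1 /\ mx_bounded M B1 /\ mx_bounded M W2 /\
  mx_bounded M B2 /\ mx_bounded M W3 /\ mx_bounded M (0 : 'cV[R]_p).
Proof.
have sign_le_M n : `|(-1) ^+ n : R| <= M by rewrite normr_sign.
have inv_norm : `|delta^-1| = delta^-1 by rewrite gtr0_norm ?invr_gt0.
do ![split]; move=> u v; rewrite !mxE ?normr0 //.
- case: splitP => j _; rewrite mxE.
    case: (enum_val u) => [[[[k k'] b]|[k b]]|[i b]] /=; rewrite ?normr0 //.
      by do 2 case: eqP => _; rewrite ?subrr ?subr0 ?sub0r ?normrN ?normr0 ?inv_norm.
    by case: eqP; rewrite ?normr0.
  case: (enum_val u) => [[[[k k'] b]|[k b]]|[i b]] /=; rewrite ?normr0 //.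
  by case: eqP; rewrite ?normr0.
- case: (enum_val u) => [[[[k k'] b]|[k b]]|[i b]] /=; rewrite ?normrN ?normr0 //.
  by rewrite normr_nat; case: b.
- case: (enum_val u) => [[[i k] a] c].
  case: (enum_val v) => [[[[k' k''] b]|[k' b]]|[i' b]] /=;
    case: eqP; rewrite ?normr0 ?normrN //.
  by case: a; rewrite /= ?mul0r ?mul1r ?normr0.
- by case: (enum_val u) => [[[i k] a] c]; rewrite normrN normr_nat; case: c.
- by case: (enum_val v) => [[[i' k] a] c] /=; case: eqP; rewrite ?normr0.
Qed.

End Bounds.

End Network.

Theorem lemmaG13 (R : realFieldType) (delta : R) (d p : nat) :
  0 < delta -> (0 < d)%N -> (0 < p)%N ->
  (* correctness on separated inputs *)
  (forall (x : 'I_d -> R) (r : 'I_p -> nat),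
     (forall k, 0 <= x k <= 1) ->
     (forall j k, j != k -> delta <= `|x j - x k| \/ (x j = 0 /\ x k = 0)) ->
     (forall i, (1 <= r i <= d)%N) ->
     forall i, NRS delta x (fun i => (r i)%:R) i = rank_stat x (r i))
  /\
  (* magnitude bound for arbitrary inputs *)
  (forall (x : 'I_d -> R) (r : 'I_p -> R) (i : 'I_p),
     `|NRS delta x r i| <= d%:R * sup_norm x)
  /\
  (* realization as a 2-hidden-layer ReLU network *)
  (exists (n1 n2 : nat)
          (W1 : 'M[R]_(n1, d + p)) (b1 : 'cV[R]_n1)
          (W2 : 'M[R]_(n2, n1)) (b2 : 'cV[R]_n2)
          (W3 : 'M[R]_(p, n2)) (b3 : 'cV[R]_p),
     (maxn n1 n2 <= maxn (2 * d ^ 2 + 2 * d + 2 * p) (4 * p * d))%N /\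
     mx_bounded (Num.max 1 delta^-1) W1 /\ mx_bounded (Num.max 1 delta^-1) b1 /\
     mx_bounded (Num.max 1 delta^-1) W2 /\ mx_bounded (Num.max 1 delta^-1) b2 /\
     mx_bounded (Num.max 1 delta^-1) W3 /\ mx_bounded (Num.max 1 delta^-1) b3 /\
     forall (x : 'I_d -> R) (r : 'I_p -> R) (i : 'I_p),
       net2 W1 b1 W2 b2 W3 b3 (net_input x r) i 0 = NRS delta x r i).
Proof.
move=> delta_gt0 _ _; split.
  move=> x r x01 x_sep r_range i; rewrite /NRS /rank_stat.
  case: (r i) (r_range i) => [//|m] /andP[_ m_lt_d].
  exact: NRS_sum_separated.
split; first exact: NRS_norm_le.
exists _, _, (W1 delta d p), (B1 R d p), (W2 R d p), (B2 R d p), (W3 R d p), 0.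
have [W1_le [B1_le [W2_le [B2_le [W3_le B3_le]]]]] := weights_bounded d p delta_gt0.
split; first exact: width_hidden.
do 6 (split; first by []).
by move=> x r i; rewrite network_eval ?gt_eqF.
Qed.
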